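(* Let $P_1$ be the uniform distribution on $J_1=[0,\frac12]$, let $P_2$ be the uniform distribution on $J_2=[\frac12,1]$, and let $P=\frac34P_1+\frac14P_2$. For $n\ge 2$, let $\alpha_n$ be an optimal set of $n$-means for $P$. Then $\alpha_n\cap J_1\neq\emptyset$ and $\alpha_n\cap J_2\neq\emptyset$.
   Context: For a finite set $\alpha\subset\mathbb R$, $V(P;\alpha)=\int\min_{a\in\alpha}(x-a)^2\,dP(x)$; $V_n=\inf\{V(P;\alpha):\mathrm{card}(\alpha)\le n\}$; an optimal set of $n$-means is a set $\alpha$ with $\mathrm{card}(\alpha)\le n$ and $V(P;\alpha)=V_n$. *)

From Stdlib Require Import Reals List.
From Coquelicot Require Import Coquelicot.
Import ListNotations.
Open Scope R_scope.

(* min_{a in alpha} (x - a)^2, for a nonempty list alpha (value on [] is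
   irrelevant: only nonempty sets are ever considered). *)
Definition min_sqdist (alpha : list R) (x : R) : R :=
  match alpha with
  | [] => 0
  | a :: t => fold_right (fun b m => Rmin ((x - b) ^ 2) m) ((x - a) ^ 2) t
  end.

(* P = 3/4 P1 + 1/4 P2, P1 uniform on [0,1/2] (density 2), P2 uniform on
   [1/2,1] (density 2).  V(P;alpha) = \int min_a (x-a)^2 dP(x). *)
Definition V (alpha : list R) : R :=
  3/4 * (2 * RInt (min_sqdist alpha) 0 (1/2))
  + 1/4 * (2 * RInt (min_sqdist alpha) (1/2) 1).

(* A finite set alpha of reals represented by a duplicate-free list;
   card alpha = length alpha. *)
Definition admissible (n : nat) (alpha : list R) : Prop :=
  alpha <> [] /\ NoDup alpha /\ (length alpha <= n)%nat.

Definition Vn (n : nat) : Rbar :=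
  Glb_Rbar (fun v => exists beta, admissible n beta /\ v = V beta).

Definition optimal_n_means (n : nat) (alpha : list R) : Prop :=
  admissible n alpha /\ Finite (V alpha) = Vn n.

(* The two-point set {1/4, 3/4} has distortion 1/48, so V alpha <= 1/48 for
   an optimal alpha.  Suppose alpha misses J1 = [0,1/2].  If some mean lies
   left of 0, moving it to 0 does not increase any distance from a point of
   [0,1] and strictly decreases the distortion on (0,1/4), contradicting
   optimality.  Otherwise every mean lies right of 1/2, and the J1 part alone
   contributes more than (3/2) * 1/24 = 1/16.  For J2 = [1/2,1] the same
   argument moves a mean from the right of 1 to 1, and otherwise the J2 part
   exceeds (1/2) * 1/24 = 1/48; this last inequality is strict because every
   mean lies strictly left of 1/2. *)
From Stdlib Require Import Reals List Lra Lia Classical.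
From Coquelicot Require Import Coquelicot.
Import ListNotations.
Open Scope R_scope.

Lemma continuous_Rmin (f g : R -> R) (x : R) :
  continuous f x -> continuous g x -> continuous (fun y => Rmin (f y) (g y)) x.
Proof.
  intros Hf Hg.
  apply continuous_ext with
    (f := fun y => mult (minus (plus (f y) (g y)) (Rabs (minus (f y) (g y)))) (/ 2)).
  { intros y. unfold mult, minus, plus, opp; simpl.
    unfold Rmin, Rabs. destruct (Rle_dec _ _), (Rcase_abs _); lra. }
  apply (@continuous_mult R_UniformSpace R_AbsRing); [|apply continuous_const].
  apply (@continuous_minus R_UniformSpace R_AbsRing R_NormedModule).
  { now apply (@continuous_plus R_UniformSpace R_AbsRing R_NormedModule). }
  apply continuous_comp with (g := Rabs); [|apply continuous_Rabs].
  now apply (@continuous_minus R_UniformSpace R_AbsRing R_NormedModule).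
Qed.

Lemma continuous_sq_dist (c x : R) : continuous (fun y => (y - c) ^ 2) x.
Proof. apply (@ex_derive_continuous R_AbsRing R_NormedModule). auto_derive. auto. Qed.

Lemma RInt_sq_dist (c a b : R) :
  RInt (fun x => (x - c) ^ 2) a b = ((b - c) ^ 3 - (a - c) ^ 3) / 3.
Proof.
  apply is_RInt_unique.
  replace (((b - c) ^ 3 - (a - c) ^ 3) / 3)
    with (minus ((b - c) ^ 3 / 3) ((a - c) ^ 3 / 3))
    by (unfold minus, plus, opp; simpl; field).
  apply (@is_RInt_derive R_CompleteNormedModule (fun x => (x - c) ^ 3 / 3)).
  - intros x _. auto_derive; auto. field.
  - intros x _. apply continuous_sq_dist.
Qed.

Lemma RInt_lt_on_subinterval (f g : R -> R) (a p q b : R) :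
  a <= p -> p < q -> q <= b ->
  (forall x, continuous f x) -> (forall x, continuous g x) ->
  (forall x, a <= x <= b -> g x <= f x) -> (forall x, p < x < q -> g x < f x) ->
  RInt g a b < RInt f a b.
Proof.
  intros Hap Hpq Hqb Hf Hg Hle Hlt.
  assert (Hexf : forall u v, ex_RInt f u v)
    by (intros; apply (@ex_RInt_continuous R_CompleteNormedModule); auto).
  assert (Hexg : forall u v, ex_RInt g u v)
    by (intros; apply (@ex_RInt_continuous R_CompleteNormedModule); auto).
  rewrite <- (RInt_Chasles f a p b), <- (RInt_Chasles g a p b) by auto.
  rewrite <- (RInt_Chasles f p q b), <- (RInt_Chasles g p q b) by auto.
  unfold plus; simpl.
  assert (RInt g a p <= RInt f a p) by (apply RInt_le; auto; intros; apply Hle; lra).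
  assert (RInt g q b <= RInt f q b) by (apply RInt_le; auto; intros; apply Hle; lra).
  assert (RInt g p q < RInt f p q) by (apply RInt_lt; auto).
  lra.
Qed.

Lemma min_sqdist_cons2 (a c : R) (t : list R) (x : R) :
  min_sqdist (a :: c :: t) x = Rmin ((x - c) ^ 2) (min_sqdist (a :: t) x).
Proof. reflexivity. Qed.

Lemma min_sqdist_le (alpha : list R) (x b : R) :
  In b alpha -> min_sqdist alpha x <= (x - b) ^ 2.
Proof.
  destruct alpha as [|a t]; [intros []|].
  induction t as [|c t IH]; intros Hb.
  - destruct Hb as [<-|[]]. simpl; lra.
  - rewrite min_sqdist_cons2. destruct Hb as [<-|[<-|Hb]].
    + eapply Rle_trans; [apply Rmin_r|]. apply IH. now left.
    + apply Rmin_l.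
    + eapply Rle_trans; [apply Rmin_r|]. apply IH. now right.
Qed.

Lemma min_sqdist_attained (alpha : list R) (x : R) :
  alpha <> [] -> exists b, In b alpha /\ min_sqdist alpha x = (x - b) ^ 2.
Proof.
  destruct alpha as [|a t]; [tauto|intros _].
  induction t as [|c t [b [Hb E]]].
  - exists a. split; [now left|reflexivity].
  - rewrite min_sqdist_cons2, E. unfold Rmin. destruct (Rle_dec _ _).
    + exists c. split; [right; now left|reflexivity].
    + exists b. split; [destruct Hb; [now left|right; now right]|reflexivity].
Qed.

Lemma min_sqdist_gt (alpha : list R) (x r : R) :
  alpha <> [] -> (forall a, In a alpha -> r < (x - a) ^ 2) -> r < min_sqdist alpha x.
Proof.
  intros Hne Hgt. destruct (min_sqdist_attained alpha x Hne) as [b [Hb ->]]. auto.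
Qed.

Lemma min_sqdist_nonneg (alpha : list R) (x : R) : 0 <= min_sqdist alpha x.
Proof.
  destruct alpha as [|a t]; [simpl; lra|].
  destruct (min_sqdist_attained (a :: t) x) as [b [_ ->]]; [discriminate|].
  apply pow2_ge_0.
Qed.

Lemma continuous_min_sqdist (alpha : list R) (x : R) : continuous (min_sqdist alpha) x.
Proof.
  destruct alpha as [|a t]; [apply continuous_const|].
  induction t as [|c t IH].
  - apply continuous_sq_dist.
  - apply continuous_Rmin; [apply continuous_sq_dist|exact IH].
Qed.

Lemma ex_RInt_min_sqdist (alpha : list R) (a b : R) : ex_RInt (min_sqdist alpha) a b.
Proof.
  apply (@ex_RInt_continuous R_CompleteNormedModule).
  intros; apply continuous_min_sqdist.
Qed.

Lemma RInt_min_sqdist_nonneg (alpha : list R) (a b : R) :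
  a <= b -> 0 <= RInt (min_sqdist alpha) a b.
Proof.
  intros Hab. apply RInt_ge_0; [exact Hab|apply ex_RInt_min_sqdist|].
  intros; apply min_sqdist_nonneg.
Qed.

Lemma RInt_min_sqdist_gt (alpha : list R) (c a b : R) :
  a < b -> alpha <> [] ->
  (forall x, a < x < b -> forall e, In e alpha -> (x - c) ^ 2 < (x - e) ^ 2) ->
  ((b - c) ^ 3 - (a - c) ^ 3) / 3 < RInt (min_sqdist alpha) a b.
Proof.
  intros Hab Hne Hgt. rewrite <- RInt_sq_dist.
  apply RInt_lt; [exact Hab|intros; apply continuous_min_sqdist
                 |intros; apply continuous_sq_dist|].
  intros x Hx. apply min_sqdist_gt; auto.
Qed.

Lemma V_lt_of_min_sqdist_lt (alpha beta : list R) (p q : R) :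
  0 <= p < q -> q <= 1 ->
  (forall x, 0 <= x <= 1 -> min_sqdist beta x <= min_sqdist alpha x) ->
  (forall x, p < x < q -> min_sqdist beta x < min_sqdist alpha x) ->
  V beta < V alpha.
Proof.
  intros Hpq Hq Hle Hlt.
  assert (Hc : forall l x, continuous (min_sqdist l) x)
    by (intros; apply continuous_min_sqdist).
  assert (Hle1 : RInt (min_sqdist beta) 0 (1/2) <= RInt (min_sqdist alpha) 0 (1/2))
    by (apply RInt_le; try apply ex_RInt_min_sqdist; try lra; intros; apply Hle; lra).
  assert (Hle2 : RInt (min_sqdist beta) (1/2) 1 <= RInt (min_sqdist alpha) (1/2) 1)
    by (apply RInt_le; try apply ex_RInt_min_sqdist; try lra; intros; apply Hle; lra).
  unfold V. destruct (Rlt_or_le p (1/2)) as [Hp|Hp].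
  - assert (RInt (min_sqdist beta) 0 (1/2) < RInt (min_sqdist alpha) 0 (1/2)).
    { apply (RInt_lt_on_subinterval _ _ 0 p (Rmin q (1/2)) (1/2)); auto.
      1-3: unfold Rmin; destruct (Rle_dec q (1/2)); lra.
      - intros; apply Hle; lra.
      - intros x Hx. apply Hlt. unfold Rmin in Hx; destruct (Rle_dec q (1/2)); lra. }
    lra.
  - assert (RInt (min_sqdist beta) (1/2) 1 < RInt (min_sqdist alpha) (1/2) 1).
    { apply (RInt_lt_on_subinterval _ _ (1/2) p q 1); auto; try lra.
      intros; apply Hle; lra. }
    lra.
Qed.

Lemma optimal_V_le (n : nat) (alpha beta : list R) :
  optimal_n_means n alpha -> admissible n beta -> V alpha <= V beta.
Proof.
  intros [_ Hopt] Hbeta.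
  destruct (Glb_Rbar_correct (fun v => exists beta, admissible n beta /\ v = V beta))
    as [Hlb _].
  specialize (Hlb (V beta) (ex_intro _ beta (conj Hbeta eq_refl))).
  unfold Vn in Hopt. rewrite <- Hopt in Hlb. exact Hlb.
Qed.

Lemma admissible_swap (n : nat) (alpha : list R) (b c : R) :
  admissible n alpha -> In b alpha -> ~ In c alpha ->
  admissible n (c :: remove Req_EM_T b alpha).
Proof.
  intros [_ [Hnodup Hlen]] Hb Hc. split; [discriminate|split].
  - constructor.
    + intros Hin. apply in_remove in Hin. tauto.
    + rewrite <- remove_alt. now apply NoDup_filter.
  - pose proof (remove_length_lt Req_EM_T alpha b Hb). simpl. lia.
Qed.

Lemma min_sqdist_swap_le (alpha : list R) (b c x : R) :
  alpha <> [] -> In b alpha -> (x - c) ^ 2 <= (x - b) ^ 2 ->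
  min_sqdist (c :: remove Req_EM_T b alpha) x <= min_sqdist alpha x.
Proof.
  intros Hne Hb Hcb. destruct (min_sqdist_attained alpha x Hne) as [a [Ha ->]].
  destruct (Req_EM_T a b) as [->|Hab].
  - eapply Rle_trans; [apply min_sqdist_le; now left|exact Hcb].
  - apply min_sqdist_le. right. now apply in_in_remove.
Qed.

Lemma optimal_no_improving_swap (n : nat) (alpha : list R) (b c p q : R) :
  optimal_n_means n alpha -> In b alpha -> 0 <= p < q -> q <= 1 ->
  (forall x, 0 <= x <= 1 -> (x - c) ^ 2 <= (x - b) ^ 2) ->
  (forall x, p < x < q -> forall a, In a alpha -> (x - c) ^ 2 < (x - a) ^ 2) ->
  False.
Proof.
  intros Hopt Hb Hpq Hq Hle Hlt.
  assert (Hadm : admissible n alpha) by apply Hopt.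
  assert (Hne : alpha <> []) by apply Hadm.
  assert (Hc : ~ In c alpha).
  { intros Hc. specialize (Hlt ((p + q) / 2) ltac:(lra) c Hc). lra. }
  pose proof (optimal_V_le n alpha _ Hopt (admissible_swap n alpha b c Hadm Hb Hc)).
  enough (V (c :: remove Req_EM_T b alpha) < V alpha) by lra.
  apply (V_lt_of_min_sqdist_lt _ _ p q Hpq Hq).
  - intros x Hx. apply min_sqdist_swap_le; auto.
  - intros x Hx. eapply Rle_lt_trans; [apply min_sqdist_le; now left|].
    apply min_sqdist_gt; auto.
Qed.

Lemma V_quartiles_le : V [1/4; 3/4] <= 1/48.
Proof.
  assert (Hex : forall c a b, ex_RInt (fun x => (x - c) ^ 2) a b)
    by (intros; apply (@ex_RInt_continuous R_CompleteNormedModule);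
        intros; apply continuous_sq_dist).
  assert (H1 : RInt (min_sqdist [1/4; 3/4]) 0 (1/2)
               <= RInt (fun x => (x - 1/4) ^ 2) 0 (1/2)).
  { apply RInt_le; [lra|apply ex_RInt_min_sqdist|apply Hex|].
    intros; apply min_sqdist_le; now left. }
  assert (H2 : RInt (min_sqdist [1/4; 3/4]) (1/2) 1
               <= RInt (fun x => (x - 3/4) ^ 2) (1/2) 1).
  { apply RInt_le; [lra|apply ex_RInt_min_sqdist|apply Hex|].
    intros; apply min_sqdist_le; right; now left. }
  rewrite RInt_sq_dist in H1, H2. unfold V. lra.
Qed.

Lemma optimal_V_le_1_48 (n : nat) (alpha : list R) :
  (2 <= n)%nat -> optimal_n_means n alpha -> V alpha <= 1/48.
Proof.
  intros Hn Hopt. eapply Rle_trans; [|exact V_quartiles_le].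
  apply (optimal_V_le n alpha _ Hopt).
  split; [discriminate|split; [|simpl; lia]].
  constructor; [intros [H|[]]; lra|].
  constructor; [intros []|constructor].
Qed.

Lemma optimal_meets_left_half (n : nat) (alpha : list R) :
  (2 <= n)%nat -> optimal_n_means n alpha -> exists a, In a alpha /\ 0 <= a <= 1/2.
Proof.
  intros Hn Hopt. pose proof (optimal_V_le_1_48 n alpha Hn Hopt).
  assert (Hne : alpha <> []) by apply Hopt.
  apply NNPP. intros Hnone.
  assert (Hout : forall a, In a alpha -> a < 0 \/ 1/2 < a).
  { intros a Ha. destruct (Rlt_or_le a 0); [now left|].
    destruct (Rlt_or_le (1/2) a); [now right|].
    exfalso. apply Hnone. exists a. split; [exact Ha|lra]. }
  destruct (classic (exists b, In b alpha /\ b < 0)) as [[b [Hb Hbneg]]|Hnoneg].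
  - apply (optimal_no_improving_swap n alpha b 0 0 (1/4) Hopt Hb); try lra.
    + intros x Hx. nra.
    + intros x Hx a Ha. destruct (Hout a Ha); nra.
  - assert (Hright : forall a, In a alpha -> 1/2 < a).
    { intros a Ha. destruct (Hout a Ha) as [Hneg|]; [|assumption].
      exfalso. apply Hnoneg. now exists a. }
    assert (1/24 < RInt (min_sqdist alpha) 0 (1/2)).
    { replace (1/24) with (((1/2 - 1/2) ^ 3 - (0 - 1/2) ^ 3) / 3) by field.
      apply RInt_min_sqdist_gt; [lra|exact Hne|].
      intros x Hx a Ha. specialize (Hright a Ha). nra. }
    pose proof (RInt_min_sqdist_nonneg alpha (1/2) 1 ltac:(lra)).
    unfold V in *. lra.
Qed.

Lemma optimal_meets_right_half (n : nat) (alpha : list R) :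
  (2 <= n)%nat -> optimal_n_means n alpha -> exists a, In a alpha /\ 1/2 <= a <= 1.
Proof.
  intros Hn Hopt. pose proof (optimal_V_le_1_48 n alpha Hn Hopt).
  assert (Hne : alpha <> []) by apply Hopt.
  apply NNPP. intros Hnone.
  assert (Hout : forall a, In a alpha -> a < 1/2 \/ 1 < a).
  { intros a Ha. destruct (Rlt_or_le a (1/2)); [now left|].
    destruct (Rlt_or_le 1 a); [now right|].
    exfalso. apply Hnone. exists a. split; [exact Ha|lra]. }
  destruct (classic (exists b, In b alpha /\ 1 < b)) as [[b [Hb Hbbig]]|Hnobig].
  - apply (optimal_no_improving_swap n alpha b 1 (3/4) 1 Hopt Hb); try lra.
    + intros x Hx. nra.
    + intros x Hx a Ha. destruct (Hout a Ha); nra.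
  - assert (Hleft : forall a, In a alpha -> a < 1/2).
    { intros a Ha. destruct (Hout a Ha) as [|Hbig]; [assumption|].
      exfalso. apply Hnobig. now exists a. }
    assert (1/24 < RInt (min_sqdist alpha) (1/2) 1).
    { replace (1/24) with (((1 - 1/2) ^ 3 - (1/2 - 1/2) ^ 3) / 3) by field.
      apply RInt_min_sqdist_gt; [lra|exact Hne|].
      intros x Hx a Ha. specialize (Hleft a Ha). nra. }
    pose proof (RInt_min_sqdist_nonneg alpha 0 (1/2) ltac:(lra)).
    unfold V in *. lra.
Qed.

Theorem proposition4p3 (n : nat) (alpha : list R) :
  (2 <= n)%nat -> optimal_n_means n alpha ->
  (exists a, In a alpha /\ 0 <= a <= 1/2) /\
  (exists a, In a alpha /\ 1/2 <= a <= 1).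
Proof.
  intros Hn Hopt. split.
  - exact (optimal_meets_left_half n alpha Hn Hopt).
  - exact (optimal_meets_right_half n alpha Hn Hopt).
Qed.
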